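(* Let $-\infty \le \delta_L < \delta_U \le \infty$, let $\theta_{j,r} \in \mathbb{R}$, let $\mathcal{I}(\theta_{j,r}) \in (0,\infty)$ be the Fisher information at $\theta_{j,r}$, and fix a point $u_{j,r} \in (0,1)$. For $\delta \in [-\infty,\infty]$ put $$a(\delta,\theta_{j,r}) = \frac{\delta-\theta_{j,r}}{\sqrt{\mathcal{I}(\theta_{j,r})^{-1}}},$$ and for real $n>0$ define $$p^{(n)}_{\delta,j,r} = \Phi\!\left(a(\delta,\theta_{j,r})\sqrt{n} - \Phi^{-1}(u_{j,r})\right).$$ Here $\Phi$ is the standard normal CDF, and the conventions $p^{(n)}_{+\infty,j,r}=1$, $p^{(n)}_{-\infty,j,r}=0$ and $a(\pm\infty,\theta_{j,r})^2=+\infty$ are used. Then $$\lim_{n\to\infty}\frac{d}{dn}\,\mathrm{logit}\!\left[p^{(n)}_{\delta_U,j,r}-p^{(n)}_{\delta_L,j,r}\right] = \Big(0.5-\mathbb{I}\{\theta_{j,r}\notin(\delta_L,\delta_U)\}\Big)\times \min\{a(\delta_U,\theta_{j,r})^2,\ a(\delta_L,\theta_{j,r})^2\},$$ where $\mathrm{logit}(x)=\log(x)-\log(1-x)$, $n$ is treated as a continuous variable, and $\mathbb{I}\{\cdot\}$ is the indicator function.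
   Context: Setting: $n$ i.i.d. observations are generated from a parametric model $f(\boldsymbol{w};\boldsymbol{\eta})$ with true parameter $\boldsymbol{\eta}_{j,r}$ drawn from a data-generating distribution $\Psi_j$ for $j\in\{0,1\}$. The scalar estimand is $\theta = g(\boldsymbol{\eta})$, with true value $\theta_{j,r}=g(\boldsymbol{\eta}_{j,r})$. The hypothesis of interest is $H_1:\theta\in(\delta_L,\delta_U)$. The paper assumes that the model satisfies the standard regularity conditions for asymptotic normality of the maximum likelihood estimator, and that the prior satisfies the conditions of the Bernstein–von Mises theorem. The only consequence used in the statement is that the Fisher information $\mathcal{I}(\theta_{j,r})$ is a finite positive number. Interpretation of the quantity $p^{(n)}_{\delta,j,r}$: it is a large-sample proxy for the posterior probability $Pr(\theta<\delta \mid \text{data})$. It is obtained by taking the posterior to be $\mathcal{N}(\hat\theta^{(n)},\mathcal{I}(\theta_{j,r})^{-1}/n)$, where the maximum likelihood estimate is generated by CDF inversion as $\hat\theta^{(n)}=\theta_{j,r}+\Phi^{-1}(u_{j,r})\sqrt{\mathcal{I}(\theta_{j,r})^{-1}/n}$. Consequently, $p^{(n)}_{\delta_U,j,r}-p^{(n)}_{\delta_L,j,r}$ serves as a proxy for $Pr(H_1\mid\text{data})$. *)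

From Stdlib Require Import Reals ClassicalEpsilon.
From Coquelicot Require Import Coquelicot.
Open Scope R_scope.

Definition std_normal_pdf (t : R) : R := / sqrt (2 * PI) * exp (- t ^ 2 / 2).

Definition Phi (x : R) : R :=
  RInt_gen std_normal_pdf (Rbar_locally m_infty) (at_point x).

Definition Phi_inv (u : R) : R :=
  epsilon (inhabits 0) (fun z => Phi z = u).

Definition logit (x : R) : R := ln x - ln (1 - x).

Definition a_fin (I theta d : R) : R := (d - theta) / sqrt (/ I).

Definition a_sq (I theta : R) (delta : Rbar) : Rbar :=
  match delta with
  | Finite d => Finite (a_fin I theta d ^ 2)
  | _ => p_infty
  end.

Definition p_n (I theta u : R) (delta : Rbar) (n : R) : R :=
  match delta with
  | Finite d => Phi (a_fin I theta d * sqrt n - Phi_inv u)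
  | p_infty => 1
  | m_infty => 0
  end.

Definition ind_not_in (theta : R) (dL dU : Rbar) : R :=
  match excluded_middle_informative (Rbar_lt dL theta /\ Rbar_lt theta dU) with
  | left _ => 0
  | right _ => 1
  end.

(* With [s = sqrt n] and [c = Phi^-1(u)] the posterior mass of [H1] is
   [F(s) = Phi(aU s - c) - Phi(aL s - c)], and
   [d/dn logit F = (aU phi(aU s - c) - aL phi(aL s - c)) / (2 s F (1 - F))].
   As [s -> oo], Mills' ratio [(1 - Phi y) / phi y] behaves like [1 / y], and
   [phi(a' s + b') / phi(a s + b) -> 0] whenever [a^2 < a'^2], so only the endpoint nearer
   to [0] matters.  If [0] lies between the endpoints, [F -> 1] and [1 - F] is the tail
   beyond that endpoint, giving [a^2 / 2]; otherwise [F -> 0] is that same tail and the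
   slope tends to [- a^2 / 2].  That [Phi] is a distribution function at all rests on the
   Gaussian integral, obtained by differentiating
   [x |-> int_0^1 exp (- x^2 (1 + t^2) / 2) / (1 + t^2) dt]. *)

From Stdlib Require Import Reals Lra Psatz ClassicalEpsilon.
From Coquelicot Require Import Coquelicot.
Open Scope R_scope.

(* Coquelicot states these results over abstract normed modules; the specialisations to [R]
   let [apply] unify with real-valued goals. *)

Lemma ex_derive_continuous_R (f : R -> R) (x : R) : ex_derive f x -> continuous f x.
Proof. apply (ex_derive_continuous (K := R_AbsRing) (V := R_NormedModule)). Qed.

Lemma ex_RInt_continuous_R (f : R -> R) a b :
  (forall z, Rmin a b <= z <= Rmax a b -> continuous f z) -> ex_RInt f a b.
Proof. apply (ex_RInt_continuous (V := R_CompleteNormedModule)). Qed.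

Lemma RInt_correct_R (f : R -> R) a b : ex_RInt f a b -> is_RInt f a b (RInt f a b).
Proof. apply (RInt_correct (V := R_CompleteNormedModule)). Qed.

Lemma RInt_ext_R (f g : R -> R) a b :
  (forall x, Rmin a b < x < Rmax a b -> f x = g x) -> RInt f a b = RInt g a b.
Proof. apply RInt_ext. Qed.

Lemma RInt_scal_R (f : R -> R) a b k :
  ex_RInt f a b -> RInt (fun t => k * f t) a b = k * RInt f a b.
Proof. apply (RInt_scal (V := R_CompleteNormedModule)). Qed.

Lemma RInt_comp_lin_R (f : R -> R) u v a b : ex_RInt f (u * a + v) (u * b + v) ->
  RInt (fun y => u * f (u * y + v)) a b = RInt f (u * a + v) (u * b + v).
Proof. apply (RInt_comp_lin (V := R_CompleteNormedModule)). Qed.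

Lemma RInt_Chasles_R (f : R -> R) a b c : ex_RInt f a b -> ex_RInt f b c ->
  RInt f a b + RInt f b c = RInt f a c.
Proof. apply (RInt_Chasles (V := R_CompleteNormedModule)). Qed.

Lemma RInt_derive_R (f df : R -> R) a b :
  (forall x, Rmin a b <= x <= Rmax a b -> is_derive f x (df x)) ->
  (forall x, Rmin a b <= x <= Rmax a b -> continuous df x) -> RInt df a b = f b - f a.
Proof.
  intros Hd Hc. apply (is_RInt_unique (V := R_CompleteNormedModule)).
  apply (is_RInt_derive (V := R_CompleteNormedModule)); assumption.
Qed.

Lemma is_derive_plus_R (f g : R -> R) (x df dg : R) : is_derive f x df -> is_derive g x dg ->
  is_derive (fun y => f y + g y) x (df + dg).
Proof. apply (is_derive_plus (K := R_AbsRing) (V := R_NormedModule)). Qed.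

Lemma is_derive_minus_R (f g : R -> R) (x df dg : R) : is_derive f x df -> is_derive g x dg ->
  is_derive (fun y => f y - g y) x (df - dg).
Proof. apply (is_derive_minus (K := R_AbsRing) (V := R_NormedModule)). Qed.

Lemma is_derive_mult_R (f g : R -> R) (x df dg : R) : is_derive f x df -> is_derive g x dg ->
  is_derive (fun y => f y * g y) x (df * g x + f x * dg).
Proof. intros Hf Hg. apply (is_derive_mult (K := R_AbsRing)); auto. intros; apply Rmult_comm. Qed.

Lemma is_derive_comp_R (f g : R -> R) (x df dg : R) : is_derive f (g x) df -> is_derive g x dg ->
  is_derive (fun y => f (g y)) x (df * dg).
Proof.
  intros Hf Hg. rewrite Rmult_comm.
  apply (is_derive_comp (K := R_AbsRing) (V := R_NormedModule)); assumption.
Qed.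

Lemma is_derive_const_R (k x : R) : is_derive (fun _ => k) x 0.
Proof. apply (is_derive_const (K := R_AbsRing) (V := R_NormedModule)). Qed.

Lemma is_derive_val (f : R -> R) (x d d' : R) : d = d' -> is_derive f x d -> is_derive f x d'.
Proof. intros <-; trivial. Qed.

Lemma is_lim_mult' (f g : R -> R) x (a b : R) : is_lim f x a -> is_lim g x b ->
  is_lim (fun y => f y * g y) x (a * b).
Proof. intros Hf Hg. apply (is_lim_mult f g x a b); trivial. exact I. Qed.

Lemma is_lim_inv' (f : R -> R) x (a : R) : is_lim f x a -> a <> 0 ->
  is_lim (fun y => / f y) x (/ a).
Proof. intros Hf Ha. apply (is_lim_inv f x a); trivial. intros E; injection E; auto. Qed.

Lemma is_lim_div' (f g : R -> R) x (a b : R) : is_lim f x a -> is_lim g x b -> b <> 0 ->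
  is_lim (fun y => f y / g y) x (a / b).
Proof. intros Hf Hg Hb. apply is_lim_mult'; trivial. apply is_lim_inv'; trivial. Qed.

Lemma is_lim_inv_p_infty : is_lim (fun y => / y) p_infty 0.
Proof. apply (is_lim_inv (fun y => y) p_infty p_infty); [apply is_lim_id | discriminate]. Qed.

Lemma is_lim_div_p_infty (b : R) : is_lim (fun s => b / s) p_infty 0.
Proof.
  replace 0 with (b * 0) by ring.
  apply is_lim_mult'; [apply is_lim_const | apply is_lim_inv_p_infty].
Qed.

Lemma is_lim_Rabs_sub (f : R -> R) x (l : R) :
  is_lim f x l -> is_lim (fun y => Rabs (f y - l)) x 0.
Proof.
  intros Hf. replace (Finite 0) with (Rbar_abs (l - l))
    by (simpl; rewrite Rminus_diag, Rabs_R0; reflexivity).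
  apply is_lim_Rabs, is_lim_minus'; [exact Hf | apply is_lim_const].
Qed.

Lemma is_lim_weighted_mean (f g p q : R -> R) x (l : R) :
  (forall y, 0 < p y) -> (forall y, 0 < q y) -> is_lim f x l -> is_lim g x l ->
  is_lim (fun y => (f y * p y + g y * q y) / (p y + q y)) x l.
Proof.
  intros Hp Hq Hf Hg.
  set (e y := Rabs (f y - l) + Rabs (g y - l)).
  assert (He : is_lim e x 0).
  { replace 0 with (0 + 0) by ring.
    apply is_lim_plus'; apply is_lim_Rabs_sub; trivial. }
  apply (is_lim_le_le_loc (fun y => l - e y) (fun y => l + e y)).
  - apply filter_forall. intros y. specialize (Hp y). specialize (Hq y). unfold e.
    pose proof (Rle_abs (f y - l)). pose proof (Rle_abs (- (f y - l))).
    pose proof (Rle_abs (g y - l)). pose proof (Rle_abs (- (g y - l))).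
    rewrite !Rabs_Ropp in *.
    split; apply Rmult_le_reg_r with (p y + q y); try lra;
      unfold Rdiv; rewrite Rmult_assoc, Rinv_l by lra; nra.
  - replace (Finite l) with (Finite (l - 0)) by (f_equal; ring).
    apply is_lim_minus'; [apply is_lim_const | exact He].
  - replace (Finite l) with (Finite (l + 0)) by (f_equal; ring).
    apply is_lim_plus'; [apply is_lim_const | exact He].
Qed.

Lemma is_lim_neg_quadratic (d e f : R) : 0 < d ->
  is_lim (fun s => - d * s ^ 2 + e * s + f) p_infty m_infty.
Proof.
  intros Hd.
  apply (is_lim_ext (fun s => s * (- d * s + e) + f)); [intros s; ring |].
  apply (is_lim_plus _ _ p_infty m_infty f); [| apply is_lim_const | reflexivity].
  apply (is_lim_mult _ _ p_infty p_infty m_infty); [apply is_lim_id | | exact I].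
  apply (is_lim_plus _ _ p_infty m_infty e); [| apply is_lim_const | reflexivity].
  replace m_infty with (Rbar_mult (- d) p_infty).
  - apply is_lim_scal_l, is_lim_id.
  - simpl. destruct Rle_dec; [exfalso; lra | reflexivity].
Qed.

Lemma is_lim_exp_neg_quadratic (d e f : R) : 0 < d ->
  is_lim (fun s => exp (- d * s ^ 2 + e * s + f)) p_infty 0.
Proof.
  intros Hd. apply (is_lim_comp exp _ p_infty 0 m_infty).
  - apply is_lim_exp_m.
  - apply is_lim_neg_quadratic, Hd.
  - exists 0. intros; discriminate.
Qed.

Lemma exp_le (x y : R) : x <= y -> exp x <= exp y.
Proof. intros [H | ->]; [left; apply exp_increasing | right]; trivial. Qed.

(** * The Gaussian integral *)

Definition gauss (t : R) : R := exp (- t ^ 2 / 2).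

Lemma gauss_pos t : 0 < gauss t.
Proof. apply exp_pos. Qed.

Lemma gauss_opp t : gauss (- t) = gauss t.
Proof. unfold gauss. f_equal. field. Qed.

Lemma is_derive_gauss (t : R) : is_derive gauss t (- t * gauss t).
Proof. unfold gauss. auto_derive; trivial. f_equal; field. Qed.

Lemma continuous_gauss t : continuous gauss t.
Proof. apply ex_derive_continuous_R. eexists. apply is_derive_gauss. Qed.

Lemma ex_RInt_gauss a b : ex_RInt gauss a b.
Proof. apply ex_RInt_continuous_R; intros; apply continuous_gauss. Qed.

Definition gauss_int (x : R) : R := RInt gauss 0 x.

Lemma is_derive_gauss_int (x : R) : is_derive gauss_int x (gauss x).
Proof.
  apply (is_derive_RInt gauss gauss_int 0).
  - apply filter_forall; intros y. apply RInt_correct_R, ex_RInt_gauss.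
  - apply continuous_gauss.
Qed.

Definition gauss_kernel (x t : R) : R := exp (- (x ^ 2 * (1 + t ^ 2)) / 2) / (1 + t ^ 2).
Definition gauss_param (x : R) : R := RInt (gauss_kernel x) 0 1.

Lemma is_derive_gauss_kernel (x t : R) :
  is_derive (fun y => gauss_kernel y t) x (- x * exp (- (x ^ 2 * (1 + t ^ 2)) / 2)).
Proof.
  unfold gauss_kernel. auto_derive.
  - nra.
  - replace (- (x * (x * 1) * (1 + t * (t * 1))) * / 2) with (- (x ^ 2 * (1 + t ^ 2)) / 2)
      by (unfold Rdiv; ring).
    field. nra.
Qed.

Lemma continuous_gauss_kernel x t : continuous (gauss_kernel x) t.
Proof. apply ex_derive_continuous_R. unfold gauss_kernel. auto_derive. nra. Qed.

Lemma continuity_2d_kernel_derive x t :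
  continuity_2d_pt (fun y v => - y * exp (- (y ^ 2 * (1 + v ^ 2)) / 2)) x t.
Proof.
  apply continuity_2d_pt_mult.
  - apply continuity_2d_pt_opp, continuity_2d_pt_id1.
  - apply continuity_1d_2d_pt_comp.
    + apply derivable_continuous_pt, derivable_pt_exp.
    + apply continuity_2d_pt_ext with (fun y v => - (y * y * (1 + v * v)) * / 2).
      { intros; simpl; field. }
      apply continuity_2d_pt_mult; [| apply continuity_2d_pt_const].
      apply continuity_2d_pt_opp.
      repeat apply continuity_2d_pt_mult; try apply continuity_2d_pt_id1.
      apply continuity_2d_pt_plus; [apply continuity_2d_pt_const |].
      apply continuity_2d_pt_mult; apply continuity_2d_pt_id2.
Qed.

(* Substituting [y = x t] in the differentiated kernel shows
   [gauss_param' = - gauss_int' * gauss_int]. *)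
Lemma RInt_derive_gauss_kernel x :
  RInt (fun t => Derive (fun y => gauss_kernel y t) x) 0 1 = - gauss x * gauss_int x.
Proof.
  rewrite (RInt_ext_R _ (fun t => - gauss x * (x * gauss (x * t + 0)))).
  2:{ intros t _. erewrite is_derive_unique; [| apply is_derive_gauss_kernel].
      unfold gauss.
      replace (- (x ^ 2 * (1 + t ^ 2)) / 2) with (- x ^ 2 / 2 + - (x * t + 0) ^ 2 / 2)
        by field.
      rewrite exp_plus. ring. }
  rewrite RInt_scal_R, RInt_comp_lin_R.
  - unfold gauss_int. do 2 f_equal; ring.
  - apply ex_RInt_gauss.
  - apply (ex_RInt_comp_lin (V := R_CompleteNormedModule)), ex_RInt_gauss.
Qed.

Lemma is_derive_gauss_param (x : R) : is_derive gauss_param x (- gauss x * gauss_int x).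
Proof.
  rewrite <- RInt_derive_gauss_kernel. apply (is_derive_RInt_param gauss_kernel 0 1 x).
  - apply filter_forall; intros y t _. eexists; apply is_derive_gauss_kernel.
  - intros t _. eapply continuity_2d_pt_ext; [| apply (continuity_2d_kernel_derive x t)].
    intros y v; simpl. symmetry; apply is_derive_unique, is_derive_gauss_kernel.
  - apply filter_forall; intros y.
    apply ex_RInt_continuous_R; intros; apply continuous_gauss_kernel.
Qed.

Lemma gauss_param_0 : gauss_param 0 = PI / 4.
Proof.
  unfold gauss_param. rewrite (RInt_ext_R _ (fun t => / (1 + t ^ 2))).
  2:{ intros t _. unfold gauss_kernel.
      replace (- (0 ^ 2 * (1 + t ^ 2)) / 2) with 0 by field.
      rewrite exp_0. field. nra. }
  rewrite (RInt_derive_R atan), atan_1, atan_0; [field | |].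
  - intros t _. apply is_derive_Reals, derivable_pt_lim_atan.
  - intros t _. apply ex_derive_continuous_R. auto_derive. nra.
Qed.

Lemma gauss_int_0 : gauss_int 0 = 0.
Proof. apply (RInt_point (V := R_CompleteNormedModule)). Qed.

Lemma gauss_param_plus_sqr x : 0 < x -> gauss_param x + gauss_int x ^ 2 / 2 = PI / 4.
Proof.
  intros Hx. transitivity (gauss_param 0 + gauss_int 0 ^ 2 / 2);
    [| rewrite gauss_param_0, gauss_int_0; field].
  symmetry. apply (eq_is_derive (V := R_NormedModule)
    (fun y => gauss_param y + gauss_int y ^ 2 / 2)); [intros y _ | exact Hx].
  apply is_derive_val with (- gauss y * gauss_int y + 2 * gauss_int y / 2 * gauss y).
  { unfold zero; simpl. field. }
  apply is_derive_plus_R; [apply is_derive_gauss_param |].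
  apply (is_derive_comp_R (fun z => z ^ 2 / 2) gauss_int); [| apply is_derive_gauss_int].
  auto_derive; trivial. field.
Qed.

Lemma is_lim_gauss : is_lim gauss p_infty 0.
Proof.
  apply (is_lim_ext (fun s => exp (- (/ 2) * s ^ 2 + 0 * s + 0))).
  - intros s. unfold gauss. f_equal. field.
  - apply is_lim_exp_neg_quadratic. lra.
Qed.

Lemma gauss_param_bounds x : 0 <= gauss_param x <= gauss x.
Proof.
  assert (Hint : ex_RInt (gauss_kernel x) 0 1).
  { apply ex_RInt_continuous_R; intros; apply continuous_gauss_kernel. }
  unfold gauss_param. split.
  - apply RInt_ge_0; [lra | exact Hint |].
    intros t _. apply Rlt_le, Rdiv_lt_0_compat; [apply exp_pos | nra].
  - replace (gauss x) with (RInt (fun _ => gauss x) 0 1)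
      by (rewrite (RInt_const (V := R_CompleteNormedModule)); unfold scal; simpl;
          unfold mult; simpl; ring).
    apply RInt_le; [lra | exact Hint | apply (ex_RInt_const (V := R_NormedModule)) |].
    intros t _. unfold gauss_kernel, gauss. rewrite <- (Rmult_1_r (exp (- x ^ 2 / 2))).
    apply Rmult_le_compat; [apply Rlt_le, exp_pos | apply Rlt_le, Rinv_0_lt_compat; nra | |].
    + apply exp_le. pose proof (pow2_ge_0 (x * t)). nra.
    + rewrite <- Rinv_1 at 2. apply Rinv_le_contravar; nra.
Qed.

Lemma gauss_int_nonneg x : 0 <= x -> 0 <= gauss_int x.
Proof.
  intros Hx. apply RInt_ge_0; [exact Hx | apply ex_RInt_gauss |].
  intros; apply Rlt_le, gauss_pos.
Qed.

Lemma is_lim_gauss_int : is_lim gauss_int p_infty (sqrt (PI / 2)).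
Proof.
  assert (Hsqr : is_lim (fun x => gauss_int x ^ 2) p_infty (PI / 2)).
  { apply (is_lim_ext_loc (fun x => 2 * (PI / 4 - gauss_param x))).
    - exists 0. intros x Hx. pose proof (gauss_param_plus_sqr x Hx). lra.
    - replace (PI / 2) with (2 * (PI / 4 - 0)) by field.
      apply is_lim_mult'; [apply is_lim_const |].
      apply is_lim_minus'; [apply is_lim_const |].
      apply (is_lim_le_le_loc (fun _ => 0) gauss); [| apply is_lim_const | apply is_lim_gauss].
      exists 0. intros; apply gauss_param_bounds. }
  apply (is_lim_ext_loc (fun x => sqrt (gauss_int x ^ 2))).
  - exists 0. intros x Hx. rewrite <- Rsqr_pow2. apply sqrt_Rsqr, gauss_int_nonneg. lra.
  - apply (filterlim_comp _ _ _ _ sqrt _ _ _ Hsqr). apply continuous_sqrt.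
Qed.

(** * The standard normal distribution *)

Local Notation pdf := std_normal_pdf.

Lemma sqrt_2PI_pos : 0 < sqrt (2 * PI).
Proof. apply sqrt_lt_R0. pose proof PI_RGT_0. lra. Qed.

Lemma std_normal_pdf_gauss t : pdf t = / sqrt (2 * PI) * gauss t.
Proof. reflexivity. Qed.

Lemma std_normal_pdf_pos t : 0 < pdf t.
Proof.
  rewrite std_normal_pdf_gauss.
  apply Rmult_lt_0_compat; [apply Rinv_0_lt_compat, sqrt_2PI_pos | apply gauss_pos].
Qed.

Lemma std_normal_pdf_opp t : pdf (- t) = pdf t.
Proof. rewrite !std_normal_pdf_gauss, gauss_opp. reflexivity. Qed.

Lemma is_derive_std_normal_pdf (t : R) : is_derive pdf t (- t * pdf t).
Proof.
  apply is_derive_val with (/ sqrt (2 * PI) * (- t * gauss t));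
    [rewrite std_normal_pdf_gauss; ring |].
  apply is_derive_scal, is_derive_gauss.
Qed.

Lemma continuous_std_normal_pdf t : continuous pdf t.
Proof. apply ex_derive_continuous_R. eexists. apply is_derive_std_normal_pdf. Qed.

Lemma ex_RInt_std_normal_pdf a b : ex_RInt pdf a b.
Proof. apply ex_RInt_continuous_R; intros; apply continuous_std_normal_pdf. Qed.

Definition pdf_int (x : R) : R := RInt pdf 0 x.

Lemma pdf_int_gauss_int x : pdf_int x = / sqrt (2 * PI) * gauss_int x.
Proof. apply RInt_scal_R, ex_RInt_gauss. Qed.

Lemma is_derive_pdf_int (x : R) : is_derive pdf_int x (pdf x).
Proof.
  apply (is_derive_RInt pdf pdf_int 0).
  - apply filter_forall; intros y. apply RInt_correct_R, ex_RInt_std_normal_pdf.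
  - apply continuous_std_normal_pdf.
Qed.

Lemma pdf_int_opp x : pdf_int (- x) = - pdf_int x.
Proof.
  unfold pdf_int.
  replace (RInt pdf 0 (- x)) with (RInt pdf (-1 * 0 + 0) (-1 * x + 0)) by (f_equal; ring).
  rewrite <- RInt_comp_lin_R by apply ex_RInt_std_normal_pdf.
  replace (- RInt pdf 0 x) with (-1 * RInt pdf 0 x) by ring.
  rewrite <- RInt_scal_R by apply ex_RInt_std_normal_pdf.
  apply RInt_ext_R. intros t _.
  replace (-1 * t + 0) with (- t) by ring. rewrite std_normal_pdf_opp. ring.
Qed.

Lemma is_lim_pdf_int : is_lim pdf_int p_infty (/ 2).
Proof.
  apply (is_lim_ext (fun x => / sqrt (2 * PI) * gauss_int x));
    [intros x; symmetry; apply pdf_int_gauss_int |].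
  replace (/ 2) with (/ sqrt (2 * PI) * sqrt (PI / 2)).
  - apply is_lim_mult'; [apply is_lim_const | apply is_lim_gauss_int].
  - pose proof PI_RGT_0.
    replace (2 * PI) with (2 * 2 * (PI / 2)) by field.
    rewrite sqrt_mult, sqrt_square by lra.
    assert (0 < sqrt (PI / 2)) by (apply sqrt_lt_R0; lra).
    field. lra.
Qed.

Lemma is_lim_pdf_int_m_infty : is_lim pdf_int m_infty (- / 2).
Proof.
  apply (is_lim_ext (fun x => - pdf_int (- x))); [intros y; rewrite pdf_int_opp; ring |].
  apply (is_lim_opp (fun x => pdf_int (- x)) m_infty (/ 2)).
  apply (is_lim_comp pdf_int (fun x => - x) m_infty (/ 2) p_infty).
  - apply is_lim_pdf_int.
  - apply (is_lim_opp (fun y => y) m_infty m_infty), is_lim_id.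
  - exists 0. intros; discriminate.
Qed.

Lemma Phi_half x : Phi x = / 2 + pdf_int x.
Proof.
  apply (is_RInt_gen_unique (V := R_CompleteNormedModule)).
  replace (/ 2 + pdf_int x) with (pdf_int x - - / 2) by ring.
  apply (is_RInt_gen_ext (V := R_NormedModule) (Derive pdf_int)).
  { apply filter_forall. intros ab y _. apply is_derive_unique, is_derive_pdf_int. }
  apply (is_RInt_gen_Derive (Fa := Rbar_locally m_infty) (Fb := at_point x)).
  - apply filter_forall. intros ab y _. eexists; apply is_derive_pdf_int.
  - apply filter_forall. intros ab y _. apply (continuous_ext pdf).
    + intros z; symmetry; apply is_derive_unique, is_derive_pdf_int.
    + apply continuous_std_normal_pdf.
  - exact is_lim_pdf_int_m_infty.
  - intros P HP. unfold filtermap, at_point. apply locally_singleton, HP.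
Qed.

Lemma is_derive_Phi (x : R) : is_derive Phi x (pdf x).
Proof.
  apply is_derive_ext with (fun y => / 2 + pdf_int y); [intros; symmetry; apply Phi_half |].
  apply is_derive_val with (0 + pdf x); [ring |].
  apply is_derive_plus_R; [apply is_derive_const_R | apply is_derive_pdf_int].
Qed.

Lemma Phi_opp x : Phi (- x) = 1 - Phi x.
Proof. rewrite !Phi_half, pdf_int_opp. field. Qed.

Lemma Phi_sub a b : Phi b - Phi a = RInt pdf a b.
Proof.
  rewrite !Phi_half. unfold pdf_int.
  rewrite <- (RInt_Chasles_R pdf 0 a b) by apply ex_RInt_std_normal_pdf.
  ring.
Qed.

Lemma Phi_increasing a b : a < b -> Phi a < Phi b.
Proof.
  intros Hab. apply Rlt_0_minus. rewrite Phi_sub.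
  apply RInt_gt_0; trivial; intros.
  - apply std_normal_pdf_pos.
  - apply continuous_std_normal_pdf.
Qed.

Lemma is_lim_Phi : is_lim Phi p_infty 1.
Proof.
  apply (is_lim_ext (fun x => / 2 + pdf_int x)); [intros; symmetry; apply Phi_half |].
  replace 1 with (/ 2 + / 2) by field.
  apply is_lim_plus'; [apply is_lim_const | apply is_lim_pdf_int].
Qed.

Lemma is_lim_std_normal_pdf : is_lim pdf p_infty 0.
Proof.
  apply (is_lim_ext (fun t => / sqrt (2 * PI) * gauss t)); [reflexivity |].
  replace 0 with (/ sqrt (2 * PI) * 0) by ring.
  apply is_lim_mult'; [apply is_lim_const | apply is_lim_gauss].
Qed.

Lemma is_lim_std_normal_pdf_div : is_lim (fun s => pdf s / s) p_infty 0.
Proof.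
  replace 0 with (0 * 0) by ring.
  apply is_lim_mult'; [apply is_lim_std_normal_pdf | apply is_lim_inv_p_infty].
Qed.

(** * Gaussian tail and Mills ratio *)

Definition tail (y : R) : R := 1 - Phi y.

Lemma is_lim_RInt_std_normal_pdf y : is_lim (fun b => RInt pdf y b) p_infty (tail y).
Proof.
  apply (is_lim_ext (fun b => Phi b - Phi y)); [intros; apply Phi_sub |].
  apply is_lim_minus'; [apply is_lim_Phi | apply is_lim_const].
Qed.

Lemma tail_le_pdf_div y : 0 < y -> tail y <= pdf y / y.
Proof.
  intros Hy. apply (is_lim_le_loc (fun b => RInt pdf y b) (fun b => (pdf y - pdf b) / y)
    p_infty (tail y) (pdf y / y)).
  - exists y. intros b Hb.
    assert (Hcont : forall t : R, continuous (fun t => t * pdf t / y) t).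
    { intros t. apply ex_derive_continuous_R. unfold std_normal_pdf. auto_derive; trivial. }
    assert (Hftc : RInt (fun t => t * pdf t / y) y b = (pdf y - pdf b) / y :> R).
    { rewrite (RInt_derive_R (fun t => - / y * pdf t)); [field; lra | | intros; apply Hcont].
      intros t _. apply is_derive_val with (- / y * (- t * pdf t)); [field; lra |].
      apply is_derive_scal, is_derive_std_normal_pdf. }
    rewrite <- Hftc. apply RInt_le; [lra | apply ex_RInt_std_normal_pdf | |].
    + apply ex_RInt_continuous_R. intros; apply Hcont.
    + intros t Ht. pose proof (std_normal_pdf_pos t).
      apply Rmult_le_reg_r with y; [exact Hy |].
      replace (t * pdf t / y * y) with (pdf t * t) by (field; lra).
      apply Rmult_le_compat_l; lra.
  - apply is_lim_RInt_std_normal_pdf.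
  - replace (Finite (pdf y / y)) with (Finite ((pdf y - 0) / y)) by (f_equal; unfold Rdiv; ring).
    apply is_lim_div'; [| apply is_lim_const | lra].
    apply is_lim_minus'; [apply is_lim_const | apply is_lim_std_normal_pdf].
Qed.

Lemma pdf_div_le_tail y : 0 < y -> pdf y / y <= (1 + / y ^ 2) * tail y.
Proof.
  intros Hy.
  apply (is_lim_le_loc (fun b => pdf y / y - pdf b / b)
    (fun b => (1 + / y ^ 2) * RInt pdf y b) p_infty (pdf y / y) ((1 + / y ^ 2) * tail y)).
  - exists y. intros b Hb.
    assert (Hcont : forall t : R, 0 < t -> continuous (fun t => pdf t * (1 + / t ^ 2)) t).
    { intros t Ht. apply ex_derive_continuous_R. unfold std_normal_pdf. auto_derive. nra. }
    assert (Hftc : RInt (fun t => pdf t * (1 + / t ^ 2)) y b = pdf y / y - pdf b / b :> R).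
    { rewrite (RInt_derive_R (fun t => -1 * pdf t * / t)).
      - field. lra.
      - intros t Ht. rewrite Rmin_left, Rmax_right in Ht by lra.
        apply is_derive_val with (-1 * (- t * pdf t) * / t + -1 * pdf t * (- / t ^ 2));
          [field; lra |].
        apply (is_derive_mult_R (fun t => -1 * pdf t) (fun t => / t)).
        + apply is_derive_scal, is_derive_std_normal_pdf.
        + auto_derive; [lra | field; lra].
      - intros t Ht. rewrite Rmin_left, Rmax_right in Ht by lra. apply Hcont. lra. }
    rewrite <- Hftc, <- RInt_scal_R by apply ex_RInt_std_normal_pdf.
    apply RInt_le; [lra | | |].
    + apply ex_RInt_continuous_R. intros t Ht.
      rewrite Rmin_left, Rmax_right in Ht by lra. apply Hcont. lra.
    + apply ex_RInt_continuous_R. intros t _. apply ex_derive_continuous_R.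
      eexists. apply is_derive_scal, is_derive_std_normal_pdf.
    + intros t Ht. pose proof (std_normal_pdf_pos t). rewrite (Rmult_comm (1 + / y ^ 2)).
      apply Rmult_le_compat_l; [lra |].
      apply Rplus_le_compat_l, Rinv_le_contravar; [apply pow_lt; lra | apply pow_incr; lra].
  - replace (Finite (pdf y / y)) with (Finite (pdf y / y - 0)) by (f_equal; ring).
    apply is_lim_minus'; [apply is_lim_const | apply is_lim_std_normal_pdf_div].
  - apply is_lim_mult'; [apply is_lim_const | apply is_lim_RInt_std_normal_pdf].
Qed.

Lemma tail_pos y : 0 < tail y.
Proof.
  assert (H1 : 0 < tail 1).
  { pose proof (pdf_div_le_tail 1 Rlt_0_1). pose proof (std_normal_pdf_pos 1).
    assert (0 < pdf 1 / 1) by (apply Rdiv_lt_0_compat; lra).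
    assert (0 < 1 + / 1 ^ 2) by (simpl; lra). nra. }
  destruct (Rle_lt_dec y 1) as [[Hy | ->] | Hy]; trivial.
  - unfold tail in *. pose proof (Phi_increasing _ _ Hy). lra.
  - pose proof (pdf_div_le_tail y ltac:(lra)). pose proof (std_normal_pdf_pos y).
    assert (0 < pdf y / y) by (apply Rdiv_lt_0_compat; lra).
    assert (0 < / y ^ 2) by (apply Rinv_0_lt_compat, pow_lt; lra). nra.
Qed.

Lemma Phi_lt_1 x : Phi x < 1.
Proof. pose proof (tail_pos x). unfold tail in *. lra. Qed.

Lemma Phi_pos x : 0 < Phi x.
Proof. pose proof (tail_pos (- x)). unfold tail in *. rewrite Phi_opp in *. lra. Qed.

Lemma Rbar_affine_p_infty (a b : R) : 0 < a -> Rbar_plus (Rbar_mult a p_infty) b = p_infty.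
Proof.
  intros Ha. simpl. destruct Rle_dec as [H | H]; [| lra].
  destruct Rle_lt_or_eq_dec; [reflexivity | lra].
Qed.

Lemma is_lim_Phi_affine a b : 0 < a -> is_lim (fun s => Phi (a * s + b)) p_infty 1.
Proof.
  intros Ha. apply is_lim_comp_lin; [| lra].
  rewrite Rbar_affine_p_infty by exact Ha. apply is_lim_Phi.
Qed.

Definition mills (y : R) : R := tail y / pdf y.

Lemma tail_mills y : tail y = mills y * pdf y.
Proof. unfold mills. pose proof (std_normal_pdf_pos y). field. lra. Qed.

Lemma mills_pos y : 0 < mills y.
Proof. apply Rdiv_lt_0_compat; [apply tail_pos | apply std_normal_pdf_pos]. Qed.

Lemma mills_bounds y : 0 < y -> y / (1 + y ^ 2) <= mills y <= / y.
Proof.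
  intros Hy. pose proof (std_normal_pdf_pos y). pose proof (pow_lt y 2 Hy).
  unfold mills. split.
  - apply Rmult_le_reg_r with (pdf y * (1 + y ^ 2) / y ^ 2).
    { apply Rdiv_lt_0_compat; [apply Rmult_lt_0_compat |]; lra. }
    replace (y / (1 + y ^ 2) * (pdf y * (1 + y ^ 2) / y ^ 2)) with (pdf y / y) by (field; lra).
    replace (tail y / pdf y * (pdf y * (1 + y ^ 2) / y ^ 2)) with ((1 + / y ^ 2) * tail y)
      by (field; lra).
    apply pdf_div_le_tail, Hy.
  - apply Rmult_le_reg_r with (pdf y); [exact H |].
    replace (tail y / pdf y * pdf y) with (tail y) by (field; lra).
    replace (/ y * pdf y) with (pdf y / y) by (field; lra).
    apply tail_le_pdf_div, Hy.
Qed.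

Lemma affine_eventually_pos (a b : R) : 0 < a ->
  Rbar_locally p_infty (fun s => 0 < s /\ 0 < a * s + b).
Proof.
  intros Ha. exists (Rabs b / a). intros s Hs.
  assert (Hb : 0 <= Rabs b / a) by (apply Rdiv_le_0_compat; [apply Rabs_pos | exact Ha]).
  assert (Has : Rabs b < a * s).
  { replace (Rabs b) with (a * (Rabs b / a)) by (field; lra). apply Rmult_lt_compat_l; lra. }
  pose proof (Rle_abs (- b)). rewrite Rabs_Ropp in *. lra.
Qed.

Lemma is_lim_affine_div (a b : R) : is_lim (fun s => a + b / s) p_infty a.
Proof.
  replace (Finite a) with (Finite (a + 0)) by (f_equal; ring).
  apply is_lim_plus'; [apply is_lim_const | apply is_lim_div_p_infty].
Qed.

Lemma is_lim_mills_affine (a b : R) : 0 < a ->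
  is_lim (fun s => s * mills (a * s + b)) p_infty (/ a).
Proof.
  intros Ha.
  apply (is_lim_le_le_loc (fun s => (a + b / s) / (/ s * / s + (a + b / s) * (a + b / s)))
                          (fun s => / (a + b / s))).
  - apply (filter_imp (fun s => 0 < s /\ 0 < a * s + b)); [| apply affine_eventually_pos, Ha].
    intros s [Hs Hy]. destruct (mills_bounds (a * s + b) Hy) as [Hlo Hhi].
    replace (a + b / s) with ((a * s + b) / s) by (field; lra).
    split.
    + replace ((a * s + b) / s / (/ s * / s + (a * s + b) / s * ((a * s + b) / s)))
        with (s * ((a * s + b) / (1 + (a * s + b) ^ 2))) by (field; nra).
      apply Rmult_le_compat_l; lra.
    + replace (/ ((a * s + b) / s)) with (s * / (a * s + b)) by (field; lra).
      apply Rmult_le_compat_l; lra.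
  - replace (/ a) with (a / (0 * 0 + a * a)) by (field; lra).
    apply is_lim_div'; [apply is_lim_affine_div | | nra].
    apply is_lim_plus'; apply is_lim_mult';
      first [apply is_lim_inv_p_infty | apply is_lim_affine_div].
  - apply is_lim_inv'; [apply is_lim_affine_div | lra].
Qed.

Lemma std_normal_pdf_ratio (a1 b1 a2 b2 s : R) :
  pdf (a2 * s + b2) / pdf (a1 * s + b1)
  = exp (- ((a2 ^ 2 - a1 ^ 2) / 2) * s ^ 2 + (a1 * b1 - a2 * b2) * s + (b1 ^ 2 - b2 ^ 2) / 2).
Proof.
  rewrite !std_normal_pdf_gauss. unfold gauss.
  replace (- (a2 * s + b2) ^ 2 / 2) with
    (- ((a2 ^ 2 - a1 ^ 2) / 2) * s ^ 2 + (a1 * b1 - a2 * b2) * s + (b1 ^ 2 - b2 ^ 2) / 2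
     + - (a1 * s + b1) ^ 2 / 2) by field.
  rewrite exp_plus. field.
  split; apply Rgt_not_eq; first [apply exp_pos | apply sqrt_2PI_pos].
Qed.

Lemma is_lim_std_normal_pdf_ratio (a1 b1 a2 b2 : R) : a1 ^ 2 < a2 ^ 2 ->
  is_lim (fun s => pdf (a2 * s + b2) / pdf (a1 * s + b1)) p_infty 0.
Proof.
  intros Ha. apply (is_lim_ext (fun s => exp (- ((a2 ^ 2 - a1 ^ 2) / 2) * s ^ 2
    + (a1 * b1 - a2 * b2) * s + (b1 ^ 2 - b2 ^ 2) / 2))).
  - intros s. symmetry. apply std_normal_pdf_ratio.
  - apply is_lim_exp_neg_quadratic. lra.
Qed.

(** * The slope of the logit of the posterior probability *)

(* [endpoint_cdf c a (sqrt n)] is the paper's [p^(n)_delta] with [a = a(delta, theta)] and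
   [c = Phi^-1(u)]; [endpoint_deriv] is its derivative in [sqrt n]. *)
Definition endpoint_cdf (c : R) (al : Rbar) (s : R) : R :=
  match al with Finite A => Phi (A * s - c) | p_infty => 1 | m_infty => 0 end.

Definition endpoint_deriv (c : R) (al : Rbar) (s : R) : R :=
  match al with Finite A => A * pdf (A * s - c) | _ => 0 end.

Definition interval_mass (c : R) (aL aU : Rbar) (s : R) : R :=
  endpoint_cdf c aU s - endpoint_cdf c aL s.

(* With [s = sqrt n], this is the derivative in [n] of [logit (interval_mass c aL aU s)]. *)
Definition logit_slope (c : R) (aL aU : Rbar) (s : R) : R :=
  (endpoint_deriv c aU s - endpoint_deriv c aL s)
  / (2 * s * (interval_mass c aL aU s * (1 - interval_mass c aL aU s))).

Lemma endpoint_cdf_opp c al s : endpoint_cdf (- c) (Rbar_opp al) s = 1 - endpoint_cdf c al s.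
Proof.
  destruct al as [A | |]; simpl; try ring.
  replace (- A * s - - c) with (- (A * s - c)) by ring. apply Phi_opp.
Qed.

Lemma endpoint_deriv_opp c al s : endpoint_deriv (- c) (Rbar_opp al) s = - endpoint_deriv c al s.
Proof.
  destruct al as [A | |]; simpl; try ring.
  replace (- A * s - - c) with (- (A * s - c)) by ring. rewrite std_normal_pdf_opp. ring.
Qed.

Lemma logit_slope_opp c aL aU s :
  logit_slope (- c) (Rbar_opp aU) (Rbar_opp aL) s = logit_slope c aL aU s.
Proof.
  unfold logit_slope, interval_mass. rewrite !endpoint_cdf_opp, !endpoint_deriv_opp.
  f_equal; [ring |]. do 2 f_equal; ring.
Qed.

Lemma is_lim_logit_slope_opp c aL aU (l : Rbar) :
  is_lim (logit_slope (- c) (Rbar_opp aU) (Rbar_opp aL)) p_infty l ->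
  is_lim (logit_slope c aL aU) p_infty l.
Proof. apply is_lim_ext. intros; apply logit_slope_opp. Qed.

Lemma interval_mass_bounds c aL aU s : Rbar_lt aL aU -> ~ (aL = m_infty /\ aU = p_infty) ->
  0 < s -> 0 < interval_mass c aL aU s < 1.
Proof.
  intros Hlt Hnot Hs. unfold interval_mass, endpoint_cdf.
  destruct aL as [B | |], aU as [A | |]; simpl in Hlt; try contradiction.
  - assert (Phi (B * s - c) < Phi (A * s - c)) by (apply Phi_increasing; nra).
    pose proof (Phi_pos (B * s - c)). pose proof (Phi_lt_1 (A * s - c)). lra.
  - pose proof (Phi_pos (B * s - c)). pose proof (Phi_lt_1 (B * s - c)). lra.
  - pose proof (Phi_pos (A * s - c)). pose proof (Phi_lt_1 (A * s - c)). lra.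
  - exfalso; apply Hnot; split; reflexivity.
Qed.

Lemma is_lim_endpoint_cdf c al : Rbar_lt 0 al -> is_lim (endpoint_cdf c al) p_infty 1.
Proof.
  intros Hal. destruct al as [A | |]; simpl in Hal; try contradiction.
  - apply (is_lim_ext (fun s => Phi (A * s + - c))); [intros; reflexivity |].
    apply is_lim_Phi_affine, Hal.
  - apply (is_lim_ext (fun _ => 1)); [reflexivity | apply is_lim_const].
Qed.

Lemma is_lim_endpoint_deriv c al : Rbar_lt 0 al -> is_lim (endpoint_deriv c al) p_infty 0.
Proof.
  intros Hal. destruct al as [A | |]; simpl in Hal; try contradiction.
  - replace 0 with (A * 0) by ring. apply is_lim_mult'; [apply is_lim_const |].
    apply (is_lim_ext (fun s => pdf (A * s + - c))); [intros; reflexivity |].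
    apply is_lim_comp_lin; [| lra].
    rewrite Rbar_affine_p_infty by exact Hal. apply is_lim_std_normal_pdf.
  - apply (is_lim_ext (fun _ => 0)); [reflexivity | apply is_lim_const].
Qed.

Lemma is_lim_endpoint_deriv_ratio c b B aU : 0 < B -> Rbar_lt B aU ->
  is_lim (fun s => endpoint_deriv c aU s / pdf (B * s + b)) p_infty 0.
Proof.
  intros HB HBU. destruct aU as [A | |]; simpl in HBU; try contradiction.
  - apply (is_lim_ext (fun s => A * (pdf (A * s + - c) / pdf (B * s + b)))).
    { intros s. simpl. replace (A * s - c) with (A * s + - c) by ring. unfold Rdiv. ring. }
    replace 0 with (A * 0) by ring. apply is_lim_mult'; [apply is_lim_const |].
    apply is_lim_std_normal_pdf_ratio. nra.
  - apply (is_lim_ext (fun _ => 0)); [intros; simpl; unfold Rdiv; ring | apply is_lim_const].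
Qed.

Lemma is_lim_endpoint_tail_ratio c b B aU : 0 < B -> Rbar_lt B aU ->
  is_lim (fun s => s * (1 - endpoint_cdf c aU s) / pdf (B * s + b)) p_infty 0.
Proof.
  intros HB HBU. destruct aU as [A | |]; simpl in HBU; try contradiction.
  - apply (is_lim_ext (fun s => s * mills (A * s + - c) * (pdf (A * s + - c) / pdf (B * s + b)))).
    { intros s. simpl. replace (A * s - c) with (A * s + - c) by ring.
      fold (tail (A * s + - c)). rewrite tail_mills. field.
      apply Rgt_not_eq, std_normal_pdf_pos. }
    replace 0 with (/ A * 0) by ring. apply is_lim_mult'.
    + apply is_lim_mills_affine. lra.
    + apply is_lim_std_normal_pdf_ratio. nra.
  - apply (is_lim_ext (fun _ => 0)); [intros; simpl; unfold Rdiv; ring | apply is_lim_const].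
Qed.

Lemma is_lim_endpoint_deriv_ratio_lower c b A aL : 0 < A -> Rbar_lt aL (- A) ->
  is_lim (fun s => endpoint_deriv c aL s / pdf (A * s + b)) p_infty 0.
Proof.
  intros HA HLA.
  apply (is_lim_ext (fun s => - (endpoint_deriv (- c) (Rbar_opp aL) s / pdf (A * s + b)))).
  { intros s. rewrite endpoint_deriv_opp. unfold Rdiv. ring. }
  replace (Finite 0) with (Rbar_opp 0) by (simpl; f_equal; ring).
  apply is_lim_opp, is_lim_endpoint_deriv_ratio; [exact HA |].
  rewrite <- (Rbar_opp_involutive A). apply Rbar_opp_lt, HLA.
Qed.

Lemma is_lim_endpoint_cdf_ratio_lower c b A aL : 0 < A -> Rbar_lt aL (- A) ->
  is_lim (fun s => s * endpoint_cdf c aL s / pdf (A * s + b)) p_infty 0.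
Proof.
  intros HA HLA.
  apply (is_lim_ext (fun s => s * (1 - endpoint_cdf (- c) (Rbar_opp aL) s) / pdf (A * s + b))).
  { intros s. rewrite endpoint_cdf_opp. f_equal. ring. }
  apply is_lim_endpoint_tail_ratio; [exact HA |].
  rewrite <- (Rbar_opp_involutive A). apply Rbar_opp_lt, HLA.
Qed.

Lemma is_lim_endpoint_cdf_neg c al : Rbar_lt al 0 -> is_lim (endpoint_cdf c al) p_infty 0.
Proof.
  intros Hal.
  apply (is_lim_ext (fun s => 1 - endpoint_cdf (- c) (Rbar_opp al) s)).
  { intros s. rewrite endpoint_cdf_opp. ring. }
  replace 0 with (1 - 1) by ring. apply is_lim_minus'; [apply is_lim_const |].
  apply is_lim_endpoint_cdf. replace (Finite 0) with (Rbar_opp 0) by (simpl; f_equal; ring).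
  apply Rbar_opp_lt, Hal.
Qed.

(* Dividing through by [pdf (B s - c)], every term coming from the farther endpoint [aU]
   vanishes in the limit, while [s * mills (B s - c)] tends to [/ B]. *)
Lemma is_lim_logit_slope_out_pos c B aU : 0 < B -> Rbar_lt B aU ->
  is_lim (logit_slope c (Finite B) aU) p_infty (- (B ^ 2 / 2)).
Proof.
  intros HB HBU. assert (HU : Rbar_lt 0 aU) by (apply Rbar_lt_trans with B; trivial).
  set (y s := B * s - c).
  set (F := interval_mass c (Finite B) aU).
  apply (is_lim_ext_loc (fun s => (endpoint_deriv c aU s / pdf (y s) - B)
    / (2 * (s * mills (y s) - s * (1 - endpoint_cdf c aU s) / pdf (y s)) * (1 - F s)))).
  - exists 0. intros s Hs.
    destruct (interval_mass_bounds c (Finite B) aU s HBU ltac:(intros [E _]; discriminate) Hs)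
      as [HF0 HF1]. fold (F s) in HF0, HF1.
    pose proof (std_normal_pdf_pos (y s)).
    assert (HF : s * mills (y s) - s * (1 - endpoint_cdf c aU s) / pdf (y s) = s * F s / pdf (y s)).
    { unfold F, interval_mass, mills, tail. simpl. fold (y s). field. lra. }
    rewrite HF. unfold logit_slope. fold (F s). simpl. fold (y s).
    field. repeat split; apply Rgt_not_eq; lra.
  - replace (- (B ^ 2 / 2)) with ((0 - B) / (2 * (/ B - 0) * (1 - 0))) by (field; lra).
    assert (0 < / B) by (apply Rinv_0_lt_compat, HB).
    apply is_lim_div'; [| | apply Rgt_not_eq; nra].
    + apply is_lim_minus'; [apply is_lim_endpoint_deriv_ratio; trivial | apply is_lim_const].
    + apply is_lim_mult'; [apply is_lim_mult'; [apply is_lim_const |] |].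
      * apply is_lim_minus'; [apply is_lim_mills_affine, HB |].
        apply is_lim_endpoint_tail_ratio; trivial.
      * apply is_lim_minus'; [apply is_lim_const |].
        replace 0 with (1 - 1) by ring. apply is_lim_minus'.
        -- apply is_lim_endpoint_cdf, HU.
        -- apply is_lim_Phi_affine, HB.
Qed.

Lemma is_lim_logit_slope_in_dominant c A aL : 0 < A -> Rbar_lt aL (- A) ->
  is_lim (logit_slope c aL (Finite A)) p_infty (A ^ 2 / 2).
Proof.
  intros HA HLA. assert (HL : Rbar_lt aL (Finite A)).
  { apply Rbar_lt_trans with (- A); trivial. simpl. lra. }
  assert (HL0 : Rbar_lt aL 0) by (apply Rbar_lt_trans with (- A); trivial; simpl; lra).
  set (y s := A * s - c).
  set (F := interval_mass c aL (Finite A)).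
  apply (is_lim_ext_loc (fun s => (A - endpoint_deriv c aL s / pdf (y s))
    / (2 * F s * (s * mills (y s) + s * endpoint_cdf c aL s / pdf (y s))))).
  - exists 0. intros s Hs.
    destruct (interval_mass_bounds c aL (Finite A) s HL ltac:(intros [_ E]; discriminate) Hs)
      as [HF0 HF1]. fold (F s) in HF0, HF1.
    pose proof (std_normal_pdf_pos (y s)).
    assert (HF : s * mills (y s) + s * endpoint_cdf c aL s / pdf (y s) = s * (1 - F s) / pdf (y s)).
    { unfold F, interval_mass, mills, tail. simpl. fold (y s). field. lra. }
    rewrite HF. unfold logit_slope. fold (F s). simpl. fold (y s).
    field. repeat split; apply Rgt_not_eq; lra.
  - replace (A ^ 2 / 2) with ((A - 0) / (2 * (1 - 0) * (/ A + 0))) by (field; lra).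
    assert (0 < / A) by (apply Rinv_0_lt_compat, HA).
    apply is_lim_div'; [| | apply Rgt_not_eq; nra].
    + apply is_lim_minus'; [apply is_lim_const | apply is_lim_endpoint_deriv_ratio_lower; trivial].
    + apply is_lim_mult'; [apply is_lim_mult'; [apply is_lim_const |] |].
      * apply is_lim_minus'; [apply is_lim_Phi_affine, HA | apply is_lim_endpoint_cdf_neg, HL0].
      * apply is_lim_plus'; [apply is_lim_mills_affine, HA |].
        apply is_lim_endpoint_cdf_ratio_lower; trivial.
Qed.

Lemma is_lim_logit_slope_in_balanced c A : 0 < A ->
  is_lim (logit_slope c (Finite (- A)) (Finite A)) p_infty (A ^ 2 / 2).
Proof.
  intros HA. set (yU s := A * s - c). set (yL s := A * s + c).
  set (F := interval_mass c (Finite (- A)) (Finite A)).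
  set (w s := (s * mills (yU s) * pdf (yU s) + s * mills (yL s) * pdf (yL s))
              / (pdf (yU s) + pdf (yL s))).
  apply (is_lim_ext_loc (fun s => A / (2 * F s * w s))).
  - exists 0. intros s Hs.
    destruct (interval_mass_bounds c (Finite (- A)) (Finite A) s ltac:(simpl; lra)
      ltac:(intros [E _]; discriminate) Hs) as [HF0 HF1]. fold (F s) in HF0, HF1.
    assert (HL : - A * s - c = - yL s) by (unfold yL; ring).
    assert (HM : 1 - F s = mills (yU s) * pdf (yU s) + mills (yL s) * pdf (yL s)).
    { unfold F, interval_mass. simpl. fold (yU s). rewrite HL, Phi_opp, <- !tail_mills.
      unfold tail. ring. }
    pose proof (std_normal_pdf_pos (yU s)). pose proof (std_normal_pdf_pos (yL s)).
    pose proof (mills_pos (yU s)). pose proof (mills_pos (yL s)).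
    unfold logit_slope, w. fold (F s). rewrite HM. simpl. fold (yU s).
    rewrite HL, std_normal_pdf_opp.
    field. repeat split; apply Rgt_not_eq; nra.
  - replace (A ^ 2 / 2) with (A / (2 * (1 - 0) * / A)) by (field; lra).
    assert (0 < / A) by (apply Rinv_0_lt_compat, HA).
    apply is_lim_div'; [apply is_lim_const | | apply Rgt_not_eq; nra].
    apply is_lim_mult'; [apply is_lim_mult'; [apply is_lim_const |] |].
    + apply is_lim_minus'; [apply is_lim_Phi_affine, HA |].
      apply is_lim_endpoint_cdf_neg. simpl. lra.
    + unfold w. apply is_lim_weighted_mean; intros; try apply std_normal_pdf_pos;
        apply is_lim_mills_affine, HA.
Qed.

Lemma is_lim_logit_slope_out_zero c aU : Rbar_lt 0 aU ->
  is_lim (logit_slope c (Finite 0) aU) p_infty 0.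
Proof.
  intros HU. set (q := Phi (- c)). set (F := interval_mass c (Finite 0) aU).
  assert (Hq : 0 < q < 1) by (split; [apply Phi_pos | apply Phi_lt_1]).
  apply (is_lim_ext_loc (fun s => (endpoint_deriv c aU s / s) / (2 * (F s * (1 - F s))))).
  - exists 0. intros s Hs.
    destruct (interval_mass_bounds c (Finite 0) aU s HU ltac:(intros [E _]; discriminate) Hs)
      as [HF0 HF1]. fold (F s) in HF0, HF1.
    unfold logit_slope. fold (F s). simpl.
    field. repeat split; apply Rgt_not_eq; lra.
  - assert (HF : is_lim F p_infty (1 - q)).
    { apply is_lim_minus'; [apply is_lim_endpoint_cdf, HU |].
      apply (is_lim_ext (fun _ => q)); [| apply is_lim_const].
      intros s. simpl. replace (0 * s - c) with (- c) by ring. reflexivity. }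
    replace 0 with ((0 * 0) / (2 * ((1 - q) * (1 - (1 - q))))) by (field; nra).
    apply is_lim_div'; [| | apply Rgt_not_eq; nra].
    + apply is_lim_mult'; [apply is_lim_endpoint_deriv, HU | apply is_lim_inv_p_infty].
    + apply is_lim_mult'; [apply is_lim_const |].
      apply is_lim_mult'; [exact HF | apply is_lim_minus'; [apply is_lim_const | exact HF]].
Qed.

Definition Rbar_sqr (x : Rbar) : Rbar :=
  match x with Finite a => Finite (a ^ 2) | _ => p_infty end.

Definition slope_limit (aL aU : Rbar) : Rbar :=
  Rbar_mult (/ 2 - if excluded_middle_informative (Rbar_lt aL 0 /\ Rbar_lt 0 aU) then 0 else 1)
            (Rbar_min (Rbar_sqr aU) (Rbar_sqr aL)).

Lemma slope_limit_opp aL aU : slope_limit (Rbar_opp aU) (Rbar_opp aL) = slope_limit aL aU.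
Proof.
  assert (Hsqr : forall x, Rbar_sqr (Rbar_opp x) = Rbar_sqr x).
  { intros [a | |]; simpl; trivial. f_equal. ring. }
  assert (Hiff : Rbar_lt (Rbar_opp aU) 0 /\ Rbar_lt 0 (Rbar_opp aL)
                 <-> Rbar_lt aL 0 /\ Rbar_lt 0 aU).
  { destruct aL as [a | |], aU as [b | |]; simpl; intuition lra. }
  unfold slope_limit. rewrite !Hsqr, Rbar_min_comm. do 3 f_equal.
  destruct excluded_middle_informative, excluded_middle_informative;
    first [reflexivity | exfalso; tauto].
Qed.

Lemma slope_limit_out (B : R) aU : 0 <= B -> Rbar_lt B aU ->
  slope_limit (Finite B) aU = - (B ^ 2 / 2).
Proof.
  intros HB HBU. unfold slope_limit.
  destruct excluded_middle_informative as [[HL _] | _]; [simpl in HL; lra |].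
  replace (Rbar_min (Rbar_sqr aU) (Rbar_sqr B)) with (Finite (B ^ 2)).
  - simpl. f_equal. field.
  - destruct aU as [A | |]; simpl in HBU |- *; try contradiction; trivial.
    rewrite Rmin_right by nra. reflexivity.
Qed.

Lemma slope_limit_in (A : R) aL : 0 < A -> Rbar_le aL (- A) ->
  slope_limit aL (Finite A) = A ^ 2 / 2.
Proof.
  intros HA HLA. unfold slope_limit.
  destruct excluded_middle_informative as [_ | Hn].
  2:{ exfalso. apply Hn. split; [| simpl; lra].
      apply Rbar_le_lt_trans with (- A); [exact HLA | simpl; lra]. }
  replace (Rbar_min (Rbar_sqr A) (Rbar_sqr aL)) with (Finite (A ^ 2)).
  - simpl. f_equal. field.
  - destruct aL as [B | |]; simpl in HLA |- *; try contradiction; trivial.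
    rewrite Rmin_left by nra. reflexivity.
Qed.

Lemma is_lim_logit_slope_out c B aU : 0 <= B -> Rbar_lt B aU ->
  is_lim (logit_slope c (Finite B) aU) p_infty (slope_limit (Finite B) aU).
Proof.
  intros [HB | <-] HBU; rewrite slope_limit_out by (trivial; lra).
  - apply is_lim_logit_slope_out_pos; trivial.
  - replace (- (0 ^ 2 / 2)) with 0 by field. apply is_lim_logit_slope_out_zero, HBU.
Qed.

Lemma is_lim_logit_slope_in c A aL : 0 < A -> Rbar_le aL (- A) ->
  is_lim (logit_slope c aL (Finite A)) p_infty (slope_limit aL (Finite A)).
Proof.
  intros HA HLA. rewrite slope_limit_in by trivial.
  destruct (Rbar_le_lt_or_eq_dec aL (- A) HLA) as [HL | ->].
  - apply is_lim_logit_slope_in_dominant; trivial.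
  - apply is_lim_logit_slope_in_balanced, HA.
Qed.

(* Up to the reflection [(c, aL, aU) -> (- c, - aU, - aL)], either [0 <= aL], or [0] lies
   between the endpoints and [aU] is the one nearer to [0]. *)
Lemma is_lim_logit_slope c aL aU : Rbar_lt aL aU -> ~ (aL = m_infty /\ aU = p_infty) ->
  is_lim (logit_slope c aL aU) p_infty (slope_limit aL aU).
Proof.
  intros Hlt Hnot.
  destruct (Rbar_le_lt_dec 0 aL) as [H0L | HL0].
  { destruct aL as [B | |]; [| destruct aU; contradiction | contradiction].
    apply is_lim_logit_slope_out; trivial. }
  destruct (Rbar_le_lt_dec aU 0) as [HU0 | H0U].
  { destruct aU as [A | |]; [| contradiction | destruct aL; contradiction].
    rewrite <- slope_limit_opp. apply is_lim_logit_slope_opp, is_lim_logit_slope_out.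
    - simpl in HU0. lra.
    - apply (proj2 (Rbar_opp_lt A aL)), Hlt. }
  destruct (Rbar_le_lt_dec aL (Rbar_opp aU)) as [Hin | Hout].
  - destruct aU as [A | |]; [| | contradiction].
    + apply is_lim_logit_slope_in; trivial.
    + destruct aL; try contradiction. exfalso; apply Hnot; split; reflexivity.
  - destruct aL as [B | |]; [| contradiction |].
    + rewrite <- slope_limit_opp. apply is_lim_logit_slope_opp, is_lim_logit_slope_in.
      * simpl in HL0 |- *. lra.
      * simpl. rewrite Ropp_involutive. apply Rbar_lt_le, Hout.
    + destruct aU; contradiction.
Qed.

Lemma is_derive_endpoint_cdf_sqrt c al (n : R) : 0 < n ->
  is_derive (fun m => endpoint_cdf c al (sqrt m)) n (endpoint_deriv c al (sqrt n) / (2 * sqrt n)).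
Proof.
  intros Hn. assert (Hs : 0 < sqrt n) by (apply sqrt_lt_R0, Hn).
  destruct al as [A | |]; simpl.
  - apply is_derive_val with (pdf (A * sqrt n - c) * (A * / (2 * sqrt n))); [field; lra |].
    apply (is_derive_comp_R Phi (fun m => A * sqrt m - c)); [apply is_derive_Phi |].
    auto_derive; [exact Hn | field; lra].
  - apply is_derive_val with 0; [unfold Rdiv; ring | apply is_derive_const_R].
  - apply is_derive_val with 0; [unfold Rdiv; ring | apply is_derive_const_R].
Qed.

Lemma is_derive_logit_interval_mass c aL aU (n : R) :
  Rbar_lt aL aU -> ~ (aL = m_infty /\ aU = p_infty) -> 0 < n ->
  is_derive (fun m => logit (interval_mass c aL aU (sqrt m))) n (logit_slope c aL aU (sqrt n)).
Proof.
  intros Hlt Hnot Hn. assert (Hs : 0 < sqrt n) by (apply sqrt_lt_R0, Hn).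
  destruct (interval_mass_bounds c aL aU (sqrt n) Hlt Hnot Hs) as [HF0 HF1].
  set (F := interval_mass c aL aU (sqrt n)) in *.
  apply is_derive_val with ((/ F + / (1 - F))
    * (endpoint_deriv c aU (sqrt n) / (2 * sqrt n) - endpoint_deriv c aL (sqrt n) / (2 * sqrt n))).
  { unfold logit_slope. fold F. field. repeat split; apply Rgt_not_eq; lra. }
  apply (is_derive_comp_R logit (fun m => interval_mass c aL aU (sqrt m))).
  - fold F. unfold logit. auto_derive; [lra | field; split; apply Rgt_not_eq; lra].
  - apply is_derive_minus_R; apply is_derive_endpoint_cdf_sqrt, Hn.
Qed.

(** * Back to the statistical parametrisation *)

Definition a_Rbar (I theta : R) (d : Rbar) : Rbar :=
  match d with Finite x => Finite (a_fin I theta x) | p_infty => p_infty | m_infty => m_infty end.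

Lemma p_n_endpoint_cdf I theta u d m :
  p_n I theta u d m = endpoint_cdf (Phi_inv u) (a_Rbar I theta d) (sqrt m).
Proof. destruct d; reflexivity. Qed.

Lemma a_Rbar_lt I theta x y : 0 < I ->
  Rbar_lt (a_Rbar I theta x) (a_Rbar I theta y) <-> Rbar_lt x y.
Proof.
  intros HI. assert (Hs : 0 < / sqrt (/ I)).
  { apply Rinv_0_lt_compat, sqrt_lt_R0, Rinv_0_lt_compat, HI. }
  destruct x as [x | |], y as [y | |]; simpl; try tauto.
  unfold a_fin, Rdiv. split; intros H; nra.
Qed.

Lemma a_Rbar_theta I theta : a_Rbar I theta theta = 0.
Proof. simpl. unfold a_fin. f_equal. unfold Rdiv. ring. Qed.

Lemma slope_limit_a_Rbar I theta dL dU : 0 < I ->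
  slope_limit (a_Rbar I theta dL) (a_Rbar I theta dU)
  = Rbar_mult (Finite (/ 2 - ind_not_in theta dL dU))
              (Rbar_min (a_sq I theta dU) (a_sq I theta dL)).
Proof.
  intros HI. unfold slope_limit, ind_not_in.
  replace (Rbar_sqr (a_Rbar I theta dU)) with (a_sq I theta dU) by (destruct dU; reflexivity).
  replace (Rbar_sqr (a_Rbar I theta dL)) with (a_sq I theta dL) by (destruct dL; reflexivity).
  rewrite <- (a_Rbar_theta I theta).
  destruct excluded_middle_informative as [H1 | H1], excluded_middle_informative as [H2 | H2];
    trivial; exfalso; rewrite !a_Rbar_lt in H1 by exact HI; tauto.
Qed.

Theorem theorem1 (dL dU : Rbar) (theta I u : R) :
  Rbar_lt dL dU ->
  ~ (dL = m_infty /\ dU = p_infty) ->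
  0 < I ->
  0 < u < 1 ->
  (forall n : R, 0 < n ->
     ex_derive (fun m => logit (p_n I theta u dU m - p_n I theta u dL m)) n) /\
  is_lim
    (fun n => Derive (fun m => logit (p_n I theta u dU m - p_n I theta u dL m)) n)
    p_infty
    (Rbar_mult (Finite (/ 2 - ind_not_in theta dL dU))
               (Rbar_min (a_sq I theta dU) (a_sq I theta dL))).
Proof.
  intros Hlt Hnot HI _.
  set (c := Phi_inv u). set (aL := a_Rbar I theta dL). set (aU := a_Rbar I theta dU).
  assert (Hlt' : Rbar_lt aL aU) by (apply a_Rbar_lt; trivial).
  assert (Hnot' : ~ (aL = m_infty /\ aU = p_infty)).
  { intros [E1 E2]. apply Hnot. destruct dL, dU; simpl in E1, E2; try discriminate; tauto. }
  assert (Hder : forall n, 0 < n ->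
    is_derive (fun m => logit (p_n I theta u dU m - p_n I theta u dL m)) n
              (logit_slope c aL aU (sqrt n))).
  { intros n Hn. apply is_derive_ext with (fun m => logit (interval_mass c aL aU (sqrt m))).
    - intros m. unfold interval_mass. rewrite !p_n_endpoint_cdf. reflexivity.
    - apply is_derive_logit_interval_mass; trivial. }
  split; [intros n Hn; eexists; apply Hder, Hn |].
  rewrite <- slope_limit_a_Rbar by exact HI.
  apply (is_lim_ext_loc (fun n => logit_slope c aL aU (sqrt n))).
  - exists 0. intros n Hn. symmetry. apply is_derive_unique, Hder, Hn.
  - apply (is_lim_comp (logit_slope c aL aU) sqrt p_infty _ p_infty).
    + apply is_lim_logit_slope; trivial.
    + apply (is_lim_sqrt_p (fun x => x)), is_lim_id.
    + exists 0. intros; discriminate.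
Qed.
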